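(* Consider binary-tree pivotal sampling on a fixed full binary tree $T$ under the standing assumptions. Let $v$ be a non-root internal node and $b\in\{0,1\}$ with $\Pr[\xi_v=b]>0$. Let $\boldsymbol\xi_I$ be the vector of statuses $\xi_u$ of all nodes $u\ne v$ in the subtree rooted at $v$, and $\boldsymbol\xi_O$ the vector of statuses of all non-root nodes outside this subtree. Then, conditionally on $\xi_v=b$, $\boldsymbol\xi_I$ and $\boldsymbol\xi_O$ are independent: for all binary vectors $\mathbf x_I,\mathbf x_O$ of matching lengths, $$\Pr[\boldsymbol\xi_I=\mathbf x_I,\boldsymbol\xi_O=\mathbf x_O\mid\xi_v=b]=\Pr[\boldsymbol\xi_I=\mathbf x_I\mid\xi_v=b]\,\Pr[\boldsymbol\xi_O=\mathbf x_O\mid\xi_v=b].$$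
   Context: Binary-tree pivotal sampling: let $T$ be a full binary tree whose leaves are identified with an index set, and let $q_i\in[0,1]$ be leaf probabilities with integer sum. Each node can store an index together with a current probability; initially each leaf $i$ stores $i$ with probability $q_i$, and the output set $\mathcal S_{\rm out}$ is empty. Repeatedly choose two sibling nodes that both store indices, say $i$ with probability $q_i$ and $j$ with probability $q_j$, with parent $P$, and remove them. If $q_i+q_j\le1$: with probability $q_i/(q_i+q_j)$ store $i$ at $P$ with probability $q_i+q_j$ ($j$ is rejected), otherwise store $j$ at $P$ with probability $q_i+q_j$ ($i$ is rejected). If $q_i+q_j>1$: with probability $(1-q_i)/(2-q_i-q_j)$ put $j$ into $\mathcal S_{\rm out}$ and store $i$ at $P$ with probability $q_i+q_j-1$; otherwise put $i$ into $\mathcal S_{\rm out}$ and store $j$ at $P$ with probability $q_i+q_j-1$. When only the root stores an index, put it into $\mathcal S_{\rm out}$ iff its probability is $1$. Carried probabilities: $\pi_v=q_i$ for a leaf $v$ with index $i$; for an internal node $v$ with children $v_1,v_2$, $\pi_v=\pi_{v_1}+\pi_{v_2}$ if $\pi_{v_1}+\pi_{v_2}<1$ and $\pi_v=\pi_{v_1}+\pi_{v_2}-1$ if $\pi_{v_1}+\pi_{v_2}>1$. Node statuses: for a non-root node $v$, $\xi_v\in\{0,1\}$ is the indicator that the index stored at $v$ (for a leaf, its own index; for an internal node, the index promoted to $v$ by the comparison of its children) belongs to the final output $\mathcal S_{\rm out}$. Standing assumptions: all leaf probabilities lie in $(0,1)$; for every internal non-root node $v$ with children $v_1,v_2$, $\pi_{v_1}+\pi_{v_2}\ne1$;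 for the two children $r_1,r_2$ of the root, $\pi_{r_1}+\pi_{r_2}=1$. *)

From HB Require Import structures.
From mathcomp Require Import all_boot all_order all_algebra.
Set Implicit Arguments. Unset Strict Implicit. Unset Printing Implicit Defensive.
Import Order.TTheory GRing.Theory Num.Theory.
Local Open Scope ring_scope.

(* Nodes are addressed by their path from the
   root: a [seq bool], [false] = go to the left child, [true] = right child.
   The index set of the leaves is the set of leaf paths. *)
Inductive btree := Lf | Nd of btree & btree.

Fixpoint sub (t : btree) (p : seq bool) : option btree :=
  match p with
  | [::] => Some t
  | b :: p' => match t with Lf => None | Nd l r => sub (if b then r else l) p' end
  end.

Fixpoint nodes_from (s : btree) (p : seq bool) : seq (seq bool) :=
  p :: match s with
       | Lf => [::]
       | Nd l r => nodes_from l (rcons p false) ++ nodes_from r (rcons p true)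
       end.

Definition nodes (t : btree) := nodes_from t [::].

Definition is_internal (t : btree) (p : seq bool) : bool :=
  if sub t p is Some (Nd _ _) then true else false.
Definition is_leaf (t : btree) (p : seq bool) : bool :=
  if sub t p is Some Lf then true else false.

Definition inodes (t : btree) := [seq p <- nodes t | is_internal t p].
Definition leaves (t : btree) := [seq p <- nodes t | is_leaf t p].

Section Pivotal.
Variable R : realFieldType.

(* Under the standing assumptions
   this is the paper's pi_v. *)
Fixpoint carried (q : seq bool -> R) (s : btree) (p : seq bool) : R :=
  match s with
  | Lf => q p
  | Nd l r =>
      let x := carried q l (rcons p false) + carried q r (rcons p true) in
      if x <= 1 then x else x - 1
  end.

Definition piv (t : btree) (q : seq bool -> R) (p : seq bool) : R :=
  if sub t p is Some s then carried q s p else 0.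

(* An outcome [w : seq bool -> bool] records, at each internal node [p],
   whether the index coming from the left child ([w p = true]) or from the
   right child ([w p = false]) is stored at [p]. *)
Fixpoint stored_from (w : seq bool -> bool) (s : btree) (p : seq bool) : seq bool :=
  match s with
  | Lf => p
  | Nd l r => if w p then stored_from w l (rcons p false)
              else stored_from w r (rcons p true)
  end.

Definition stored (t : btree) (w : seq bool -> bool) (p : seq bool) : seq bool :=
  if sub t p is Some s then stored_from w s p else p.

Definition loser (t : btree) (w : seq bool -> bool) (p : seq bool) : seq bool :=
  if w p then stored t w (rcons p true) else stored t w (rcons p false).

(* probability that the comparison at a node whose children carry [a] (left,
   index i) and [b] (right, index j) yields choice [c]
   (c = true: i is stored at the parent). *)
Definition choice_prob (a b : R) (c : bool) : R :=
  let pl := if a + b <= 1 then a / (a + b) else (1 - a) / (2 - a - b) in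
  if c then pl else 1 - pl.

Definition out_list (t : btree) (q : seq bool -> R) (w : seq bool -> bool) :=
  [seq loser t w p | p <- inodes t &
     (p != [::]) && (1 < piv t q (rcons p false) + piv t q (rcons p true))]
  ++ (if piv t q [::] == 1 then [:: stored t w [::]] else [::]).

Definition xi (t : btree) (q : seq bool -> R) (w : seq bool -> bool)
  (u : seq bool) : bool := stored t w u \in out_list t q w.

Definition weight (t : btree) (q : seq bool -> R) (w : seq bool -> bool) : R :=
  \prod_(p <- inodes t)
     choice_prob (piv t q (rcons p false)) (piv t q (rcons p true)) (w p).

Fixpoint assigns (ps : seq (seq bool)) : seq (seq bool -> bool) :=
  match ps with
  | [::] => [:: fun _ => false]
  | p :: ps' => [seq (fun x => if x == p then c else f x)
                | c <- [:: true; false], f <- assigns ps']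
  end.

Definition Pr (t : btree) (q : seq bool -> R)
  (E : (seq bool -> bool) -> bool) : R :=
  \sum_(w <- assigns (inodes t)) weight t q w * (E w)%:R.

Definition cPr (t : btree) (q : seq bool -> R)
  (E F : (seq bool -> bool) -> bool) : R :=
  Pr t q (fun w => E w && F w) / Pr t q F.

End Pivotal.

Definition Inodes (t : btree) (v : seq bool) :=
  [seq u <- nodes t | prefix v u && (u != v)].
Definition Onodes (t : btree) (v : seq bool) :=
  [seq u <- nodes t | (u != [::]) && ~~ prefix v u].

(* Each internal node makes an independent random choice of which child's
   index it keeps, and the status of a child is a function of the status of its
   parent and of the parent's choice: the kept index inherits the parent's
   status, the rejected one is output iff the comparison at the parent had sum
   larger than 1.  Hence, given xi_v = b, the statuses strictly inside the
   subtree of v are a function of b and of the choices inside the subtree,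
   whereas xi_v and the statuses outside the subtree only depend on the choices
   outside it.  The probability being a product over the choices, the
   conditional law factors. *)

From HB Require Import structures.
From mathcomp Require Import all_boot all_order all_algebra.
From mathcomp Require Import ring.
Import Order.TTheory GRing.Theory Num.Theory.
Set Implicit Arguments. Unset Strict Implicit. Unset Printing Implicit Defensive.
Local Open Scope ring_scope.

Section Prefix.
Variable T : eqType.
Implicit Types s x y : seq T.

Lemma prefix_antisym x y : prefix x y -> prefix y x -> x = y.
Proof.
move=> xy yx; have Exy : size x = size y by apply/eqP; rewrite eqn_leq !size_prefix.
by move: xy; rewrite prefixE Exy take_size => /eqP.
Qed.

Lemma prefix_total s x y : prefix x s -> prefix y s -> prefix x y || prefix y x.
Proof.
rewrite !prefixE => /eqP xs /eqP ys; apply/orP.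
case: (leqP (size x) (size y)) => [le_xy|lt_yx].
  by left; rewrite -{2}xs -{1}ys take_takel.
by right; rewrite -{2}ys -{1}xs take_takel // ltnW.
Qed.

Lemma prefix_size_inj s x y : prefix x s -> prefix y s -> size x = size y -> x = y.
Proof.
move=> xs ys Exy; case/orP: (prefix_total xs ys); rewrite prefixE.
  by rewrite Exy take_size => /eqP.
by rewrite -Exy take_size => /eqP.
Qed.

Lemma prefix_rcons_inj s x a b :
  prefix (rcons x a) s -> prefix (rcons x b) s -> a = b.
Proof.
move=> xa xb; have := prefix_size_inj xa xb; rewrite !size_rcons => /(_ erefl).
by case/rcons_inj.
Qed.

Lemma prefix_rcons_neq x y a : prefix y (rcons x a) -> y != rcons x a -> prefix y x.
Proof.
case/prefixP=> z; case/lastP: z => [|z c]; first by rewrite cats0 => ->; rewrite eqxx.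
by rewrite -rcons_cat => /rcons_inj[-> _] _; apply: prefix_prefix.
Qed.

Lemma prefix_neq_rcons x y : prefix x y -> x != y -> exists a, prefix (rcons x a) y.
Proof.
case/prefixP=> [[|a z] ->]; first by rewrite cats0 eqxx.
by exists a; rewrite -cat_rcons prefix_prefix.
Qed.

End Prefix.

Lemma sub_cat t x y : sub t (x ++ y) = obind (sub^~ y) (sub t x).
Proof. by elim: x t => [|b x IHx] [|l r] //=; case: y. Qed.

Lemma sub_rcons t x b : sub t (rcons x b) =
  if sub t x is Some (Nd l r) then Some (if b then r else l) else None.
Proof.
rewrite -cats1 sub_cat; case: (sub t x) => [[|l r]|] //=.
by case: b; [case: r | case: l].
Qed.

Lemma nodes_fromP s r x :
  reflect (exists2 z, x = r ++ z & isSome (sub s z)) (x \in nodes_from s r).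
Proof.
apply: (iffP idP).
  elim: s r => [|l IHl rt IHr] r /=.
    by rewrite inE => /eqP ->; exists [::]; rewrite ?cats0.
  rewrite inE mem_cat => /orP[/eqP ->|/orP[/IHl|/IHr]]; first by exists [::]; rewrite ?cats0.
    by case=> z -> ?; exists (false :: z); rewrite ?cat_rcons.
  by case=> z -> ?; exists (true :: z); rewrite ?cat_rcons.
case=> z ->; elim: s r z => [|l IHl rt IHr] r [|[] z] //=; rewrite ?cats0 ?mem_head //.
  by move=> ?; rewrite inE mem_cat -cat_rcons IHr ?orbT.
by move=> ?; rewrite inE mem_cat -cat_rcons IHl ?orbT.
Qed.

Lemma mem_nodes t x : (x \in nodes t) = isSome (sub t x).
Proof. by apply/nodes_fromP/idP => [[z ->]|]; last exists x. Qed.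

Lemma mem_inodes t x : (x \in inodes t) = is_internal t x.
Proof. by rewrite mem_filter mem_nodes /is_internal andbC; case: (sub t x) => [[]|]. Qed.

Lemma uniq_nodes_from s r : uniq (nodes_from s r).
Proof.
elim: s r => [|l IHl rt IHr] r //=; rewrite cat_uniq IHl IHr andbT /=.
have at_size x b z : x = rcons r b ++ z -> nth false x (size r) = b.
  by move=> ->; rewrite cat_rcons nth_cat ltnn subnn.
apply/andP; split.
  by rewrite mem_cat; apply/norP; split; apply/negP => /nodes_fromP[z /(congr1 size)];
    rewrite size_cat size_rcons => /eqP; rewrite -{1}[size r]addn0 addSnnS eqn_add2l.
apply/hasPn => x /nodes_fromP[z1 /at_size E1 _]; apply/negP => /nodes_fromP[z2 /at_size].
by rewrite E1.
Qed.

Lemma uniq_inodes t : uniq (inodes t).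
Proof. exact/filter_uniq/uniq_nodes_from. Qed.

Section StoredIndex.
Variables (t : btree) (w : seq bool -> bool).

Lemma prefix_stored_from s x : prefix x (stored_from w s x).
Proof.
elim: s x => [|l IHl r IHr] x /=; first exact: prefix_refl.
by case: (w x); [apply: prefix_trans (IHl _) | apply: prefix_trans (IHr _)];
  apply: prefix_rcons.
Qed.

Lemma prefix_stored x : prefix x (stored t w x).
Proof.
by rewrite /stored; case: (sub t x) => [s|]; [apply: prefix_stored_from | apply: prefix_refl].
Qed.

Lemma stored_on_path s x y : sub t x = Some s -> prefix x y ->
  prefix y (stored_from w s x) -> stored t w y = stored_from w s x.
Proof.
elim: s x => [|l IHl r IHr] x sx xy y_st.
  by rewrite -(prefix_antisym xy y_st) /stored sx.
have [<-|x_neq_y] := eqVneq x y; first by rewrite /stored sx.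
have [a xa_y] := prefix_neq_rcons xy x_neq_y.
have xa_st := prefix_trans xa_y y_st; move: y_st xa_st => /=.
case: (w x) => y_st xa_st.
  rewrite (prefix_rcons_inj xa_st (prefix_stored_from l (rcons x false))) in xa_y.
  by apply: IHl => //; rewrite sub_rcons sx.
rewrite (prefix_rcons_inj xa_st (prefix_stored_from r (rcons x true))) in xa_y.
by apply: IHr => //; rewrite sub_rcons sx.
Qed.

Lemma stored_child a l r : sub t a = Some (Nd l r) ->
  stored t w a = stored t w (rcons a (~~ w a)).
Proof. by move=> sa; rewrite /stored sa sub_rcons sa /=; case: (w a). Qed.

Lemma loserE a : loser t w a = stored t w (rcons a (w a)).
Proof. by rewrite /loser; case: (w a). Qed.

(* The loser at [a] sits below the child [rcons a (w a)], while everything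
   stored at or above [a] comes from the other child. *)
Lemma stored_neq_loser x a l r : sub t a = Some (Nd l r) ->
  prefix x a -> stored t w x != loser t w a.
Proof.
move=> sa xa; case sx: (sub t x) => [s|]; last first.
  by move: xa sa => /prefixP[z ->]; rewrite sub_cat sx.
apply/eqP; rewrite loserE => E.
have loser_below := prefix_stored (rcons a (w a)); rewrite -E in loser_below.
have a_st : prefix a (stored t w x) := prefix_trans (prefix_rcons _ _) loser_below.
have Exa : stored t w x = stored t w a.
  have a_st' : prefix a (stored_from w s x) by move: a_st; rewrite /stored sx.
  by rewrite (stored_on_path sx xa a_st') /stored sx.
have winner_below := prefix_stored (rcons a (~~ w a)).
rewrite -(stored_child sa) -Exa in winner_below.
by have := prefix_rcons_inj loser_below winner_below; case: (w a).
Qed.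

Lemma loser_inj a p la ra lp rp : sub t a = Some (Nd la ra) ->
  sub t p = Some (Nd lp rp) -> loser t w a = loser t w p -> a = p.
Proof.
move=> sa sp E.
have [/rcons_inj[]//|neq] := eqVneq (rcons a (w a)) (rcons p (w p)).
have a_below := prefix_stored (rcons a (w a)).
have p_below := prefix_stored (rcons p (w p)).
rewrite -!loserE E in a_below p_below.
case/orP: (prefix_total a_below p_below) => [ap|pa].
  by have := stored_neq_loser sp (prefix_rcons_neq ap neq); rewrite -loserE E eqxx.
rewrite eq_sym in neq.
by have := stored_neq_loser sa (prefix_rcons_neq pa neq); rewrite -loserE E eqxx.
Qed.

End StoredIndex.

Section ProductExpectation.
Variable T : eqType.

Definition local_to (X : Type) (D : pred T) (F : (T -> bool) -> X) :=
  forall w w', (forall p, D p -> w p = w' p) -> F w = F w'.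

Definition upd (w : T -> bool) (p : T) (c : bool) : T -> bool :=
  fun x => if x == p then c else w x.

Variables (R : comPzRingType) (cp : T -> bool -> R).

(* Integral of [F] against the product over [ps] of the weights [cp p];
   coordinates outside [ps] are fixed to [false]. *)
Fixpoint Eprod (ps : seq T) (F : (T -> bool) -> R) : R :=
  if ps is p :: ps' then
    cp p true * Eprod ps' (fun w => F (upd w p true))
    + cp p false * Eprod ps' (fun w => F (upd w p false))
  else F (fun _ => false).

Lemma eq_Eprod ps (F G : (T -> bool) -> R) :
  (forall w, F w = G w) -> Eprod ps F = Eprod ps G.
Proof.
elim: ps F G => [|p ps IHps] F G FG /=; first exact: FG.
by congr (_ * _ + _ * _); apply: IHps => w; apply: FG.
Qed.

Lemma local_to_upd X (D : pred T) (F : (T -> bool) -> X) p c :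
  local_to D F -> local_to D (fun w => F (upd w p c)).
Proof. by move=> lF w w' eq_w; apply: lF => x Dx; rewrite /upd; case: eqP => // _; apply: eq_w. Qed.

Lemma Eprod_factor (D : pred T) ps (A B : (T -> bool) -> R) :
  local_to D A -> local_to (predC D) B ->
  Eprod ps (fun w => A w * B w) =
  Eprod [seq p <- ps | D p] A * Eprod [seq p <- ps | ~~ D p] B.
Proof.
elim: ps A B => [|p ps IHps] A B lA lB //=.
case Dp: (D p) => /=.
  have Bupd c w : B (upd w p c) = B w.
    by apply: lB => x; rewrite /upd; case: eqP => // ->; rewrite /= Dp.
  have EBupd c : Eprod ps (fun w => A (upd w p c) * B (upd w p c))
                 = Eprod ps (fun w => A (upd w p c) * B w).
    by apply: eq_Eprod => w; rewrite Bupd.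
  rewrite !EBupd.
  rewrite !IHps //; try exact: local_to_upd.
  by rewrite mulrDl !mulrA.
have Aupd c w : A (upd w p c) = A w.
  by apply: lA => x; rewrite /upd; case: eqP => // ->; rewrite Dp.
have EAupd c : Eprod ps (fun w => A (upd w p c) * B (upd w p c))
               = Eprod ps (fun w => A w * B (upd w p c)).
  by apply: eq_Eprod => w; rewrite Aupd.
rewrite !EAupd.
rewrite !IHps //; try exact: local_to_upd.
by rewrite mulrDr !mulrA [cp p true * _]mulrC [cp p false * _]mulrC.
Qed.

End ProductExpectation.

Lemma Eprod_sum (R : comPzRingType) (cp : seq bool -> bool -> R) ps
    (F : (seq bool -> bool) -> R) : uniq ps ->
  \sum_(w <- assigns ps) (\prod_(p <- ps) cp p (w p)) * F w = Eprod cp ps F.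
Proof.
elim: ps F => [|p ps IHps] F /=; first by rewrite big_seq1 big_nil mul1r.
case/andP => p_ps uniq_ps.
rewrite !big_cat big_nil !big_map -!IHps // !big_distrr /= addr0.
have upd_off c (f : seq bool -> bool) :
    \prod_(p' <- ps) cp p' (upd f p c p') = \prod_(p' <- ps) cp p' (f p').
  by apply: eq_big_seq => p' p'_ps; rewrite /upd; case: eqP => // E; rewrite -E p'_ps in p_ps.
by congr (_ + _); apply: eq_bigr => f _; rewrite big_cons /upd eqxx -/(upd f p _) upd_off mulrA.
Qed.

Lemma frac_split (R : fieldType) (a g m h : R) :
  a * g / (m * h) = a * h / (m * h) * (m * g / (m * h)).
Proof.
have [->|m0] := eqVneq m 0; first by rewrite !mul0r invr0 !mulr0.
have [->|h0] := eqVneq h 0; first by rewrite !mulr0 invr0 !mulr0.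
by field; rewrite m0 h0.
Qed.

Lemma Eprod_cond_indep (T : eqType) (R : fieldType) (cp : T -> bool -> R)
    (D : pred T) ps (A A' B H : (T -> bool) -> bool) :
  (forall w, H w -> A w = A' w) ->
  local_to D A' -> local_to (predC D) B -> local_to (predC D) H ->
  Eprod cp ps (fun w => (A w && B w && H w)%:R) / Eprod cp ps (fun w => (H w)%:R)
  = Eprod cp ps (fun w => (A w && H w)%:R) / Eprod cp ps (fun w => (H w)%:R)
    * (Eprod cp ps (fun w => (B w && H w)%:R) / Eprod cp ps (fun w => (H w)%:R)).
Proof.
move=> AA' lA' lB lH.
have split (F G : (T -> bool) -> bool) : local_to D F -> local_to (predC D) G ->
    Eprod cp ps (fun w => (F w && G w)%:R)
    = Eprod cp [seq p <- ps | D p] (fun w => (F w)%:R)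
      * Eprod cp [seq p <- ps | ~~ D p] (fun w => (G w)%:R).
  move=> lF lG; rewrite -(@Eprod_factor _ _ cp D ps (fun w => (F w)%:R) (fun w => (G w)%:R)).
    by apply: eq_Eprod => w; rewrite -natrM mulnb.
  by move=> w w' /lF ->.
  by move=> w w' /lG ->.
have lT : local_to D (fun=> true) by [].
have lBH : local_to (predC D) (fun w => B w && H w).
  by move=> w w' eq_w; rewrite (lB _ _ eq_w) (lH _ _ eq_w).
have -> : Eprod cp ps (fun w => (A w && B w && H w)%:R)
          = Eprod cp ps (fun w => (A' w && (B w && H w))%:R).
  by apply: eq_Eprod => w; rewrite -andbA; case Hw: (H w); rewrite ?andbF // AA'.
have -> : Eprod cp ps (fun w => (A w && H w)%:R) = Eprod cp ps (fun w => (A' w && H w)%:R).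
  by apply: eq_Eprod => w; case Hw: (H w); rewrite ?andbF // AA'.
have -> : Eprod cp ps (fun w => (H w)%:R)
          = Eprod cp ps (fun w => (true && H w)%:R) by [].
have -> : Eprod cp ps (fun w => (B w && H w)%:R)
          = Eprod cp ps (fun w => (true && (B w && H w))%:R) by [].
by rewrite !split //; apply: frac_split.
Qed.

Section Status.
Variables (R : realFieldType) (t : btree) (q : seq bool -> R).

Lemma xi_nil w : xi t q w [::] = (piv t q [::] == 1).
Proof.
rewrite /xi /out_list mem_cat; case: eqP => _; first by rewrite mem_head orbT.
rewrite orbF; apply/negbTE/mapP => -[p]; rewrite mem_filter mem_inodes /is_internal.
case sp: (sub t p) => [[|l r]|]; rewrite ?andbF // => _ E.
by move: (stored_neq_loser w sp (prefix0s p)); rewrite E eqxx.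
Qed.

(* [w a == ~~ c] says that the index of the child [rcons a c] is kept at [a]. *)
Definition child_status (w : seq bool -> bool) a c x : bool :=
  if w a == ~~ c then x
  else (a != [::]) && (1 < piv t q (rcons a false) + piv t q (rcons a true)).

Lemma xi_rcons w a c : isSome (sub t (rcons a c)) ->
  xi t q w (rcons a c) = child_status w a c (xi t q w a).
Proof.
rewrite sub_rcons; case sa: (sub t a) => [[|l r]|] // _.
rewrite /child_status; case: eqP => [wa|wa_neq].
  by rewrite /xi (stored_child w sa) wa negbK.
have {wa_neq}-> : c = w a by move: wa_neq; case: (w a); case: c.
rewrite /xi -loserE /out_list mem_cat.
have -> : (loser t w a \in (if piv t q [::] == 1 then [:: stored t w [::]] else [::])) = false.
  case: (_ == 1) => //; rewrite inE eq_sym.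
  exact/negbTE/(stored_neq_loser w sa (prefix0s a)).
rewrite orbF; apply/mapP/idP => [[p]|a_out].
  rewrite mem_filter mem_inodes /is_internal.
  by case sp: (sub t p) => [[|l' r']|]; rewrite ?andbF ?andbT // => p_out /(loser_inj sa sp) ->.
by exists a; rewrite // mem_filter a_out mem_inodes /is_internal sa.
Qed.

Lemma xi_local u : isSome (sub t u) ->
  local_to [pred y | prefix y u & y != u] (fun w => xi t q w u).
Proof.
elim/last_ind: u => [_ w w' _|a c IHa]; first by rewrite !xi_nil.
move=> sac w w' eq_w; have sa : isSome (sub t a) by move: sac; rewrite sub_rcons; case: (sub t a).
have a_lt : prefix a (rcons a c) && (a != rcons a c).
  by rewrite prefix_rcons /=; apply/eqP => /(congr1 size)/eqP; rewrite size_rcons ltn_eqF ?ltnSn.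
rewrite !xi_rcons // /child_status (eq_w a a_lt) (IHa sa w w') // => y /andP[ya y_neq].
apply: eq_w; rewrite /= (prefix_trans ya (prefix_rcons a c)); apply/eqP => E.
by move: (size_prefix ya); rewrite E size_rcons ltnn.
Qed.

Definition choice_law p : bool -> R :=
  choice_prob (piv t q (rcons p false)) (piv t q (rcons p true)).

Lemma PrE E : Pr t q E = Eprod choice_law (inodes t) (fun w => (E w)%:R).
Proof. by rewrite /Pr -Eprod_sum ?uniq_inodes. Qed.

Fixpoint path_status (w : seq bool -> bool) r x z : bool :=
  if z is c :: z' then path_status w (rcons r c) (child_status w r c x) z' else x.

Lemma path_status_rcons w r x z c :
  path_status w r x (rcons z c) = child_status w (r ++ z) c (path_status w r x z).
Proof. by elim: z r x => [|c' z IHz] r x /=; rewrite ?cats0 ?IHz ?cat_rcons. Qed.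

Lemma xi_cat w r z : isSome (sub t (r ++ z)) ->
  xi t q w (r ++ z) = path_status w r (xi t q w r) z.
Proof.
elim/last_ind: z => [|z c IHz]; first by rewrite cats0.
rewrite -rcons_cat path_status_rcons => srzc; rewrite xi_rcons // IHz //.
by move: srzc; rewrite sub_rcons; case: (sub t (r ++ z)).
Qed.

Lemma path_status_local r x z :
  local_to (prefix r) (fun w => path_status w r x z).
Proof.
elim: z r x => [|c z IHz] r x w w' eq_w //=.
rewrite /child_status (eq_w r (prefix_refl r)).
apply: IHz => y ry; apply: eq_w; exact: prefix_trans (prefix_rcons r c) ry.
Qed.

End Status.

Theorem propositionE4 (R : realFieldType) (t : btree) (q : seq bool -> R)
  (Hq : forall p, p \in leaves t -> 0 < q p < 1)
  (Hsum : exists n : nat, \sum_(p <- leaves t) q p = n%:R)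
  (Hint : forall p, p \in inodes t -> p != [::] ->
            piv t q (rcons p false) + piv t q (rcons p true) != 1)
  (Hroot : piv t q [:: false] + piv t q [:: true] = 1)
  (v : seq bool) (Hv : v \in inodes t) (Hv0 : v != [::]) (b : bool)
  (Hpos : 0 < Pr t q (fun w => xi t q w v == b))
  (xI xO : seq bool -> bool) :
  cPr t q (fun w => all (fun u => xi t q w u == xI u) (Inodes t v)
                    && all (fun u => xi t q w u == xO u) (Onodes t v))
          (fun w => xi t q w v == b)
  = cPr t q (fun w => all (fun u => xi t q w u == xI u) (Inodes t v))
            (fun w => xi t q w v == b)
    * cPr t q (fun w => all (fun u => xi t q w u == xO u) (Onodes t v))
              (fun w => xi t q w v == b).
Proof.
pose inner w := all (fun u => path_status t q w v b (drop (size v) u) == xI u) (Inodes t v).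
have outside_v u x : (forall y, prefix y u -> y != u -> ~~ prefix v y) ->
    isSome (sub t u) -> local_to (predC (prefix v)) (fun w => xi t q w u == x).
  move=> out su w w' eq_w; congr (_ == _).
  by apply: (xi_local q su) => y /andP[yu y_neq]; apply: eq_w; apply: out.
rewrite /cPr !PrE; apply: (@Eprod_cond_indep _ _ _ (prefix v) _ _ inner).
- move=> w /eqP xiv; apply: eq_in_all => u.
  rewrite mem_filter mem_nodes => /andP[/andP[/prefixP[z ->] _] svz].
  by rewrite drop_size_cat // -xiv; congr (_ == _); apply: xi_cat.
- by move=> w w' eq_w; apply: eq_in_all => u _; rewrite (path_status_local _ _ _ _ eq_w).
- move=> w w' eq_w; apply: eq_in_all => u.
  rewrite mem_filter mem_nodes => /andP[/andP[_ vu] su].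
  apply: (outside_v u (xO u) _ su w w' eq_w) => y yu _.
  by apply/negP => vy; rewrite (prefix_trans vy yu) in vu.
- have sv : isSome (sub t v) by move: Hv; rewrite mem_inodes /is_internal; case: sub.
  apply: (outside_v v b _ sv) => y yv y_neq.
  by apply/negP => vy; rewrite (prefix_antisym yv vy) eqxx in y_neq.
Qed.
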